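(* Let $X$ be an irreducible affine variety over an algebraically closed field $\mathbb{K}$ of characteristic zero, and let $U\subseteq \mathbb{K}[X]$ be a linear subspace which is invariant under all regular automorphisms of $X$. Then $\partial(U)\subseteq U$ for every locally nilpotent derivation $\partial$ of $\mathbb{K}[X]$. Moreover, if $\mathbb{K}[X]=\bigoplus_{i\in\mathbb{Z}}\mathbb{K}[X]_i$ is a $\mathbb{Z}$-graded algebra, then $U=\bigoplus_{i\in\mathbb{Z}}\bigl(U\cap \mathbb{K}[X]_i\bigr)$.
   Context: A derivation $\partial$ of $\mathbb{K}[X]$ (a $\mathbb{K}$-linear map with $\partial(ab)=a\partial(b)+b\partial(a)$) is locally nilpotent if for every $a$ there is $n$ with $\partial^n(a)=0$. Automorphisms of $X$ act on $\mathbb{K}[X]$ by pullback. *)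

From HB Require Import structures.
From mathcomp Require Import all_boot all_order all_algebra.
Set Implicit Arguments. Unset Strict Implicit. Unset Printing Implicit Defensive.
Import GRing.Theory.
Local Open Scope ring_scope.

Definition subspace (K : fieldType) (A : lmodType K) (U : A -> Prop) : Prop :=
  U 0 /\ forall (k : K) (u v : A), U u -> U v -> U (k *: u + v).

Definition fin_gen_algebra (K : fieldType) (A : comAlgType K) : Prop :=
  exists s : seq A, forall P : A -> Prop,
    (forall x, x \in s -> P x) -> P 1 ->
    (forall (k : K) u v, P u -> P v -> P (k *: u + v)) ->
    (forall u v, P u -> P v -> P (u * v)) ->
    forall a, P a.

(* A has no zero divisors (1 != 0 holds since A is a nonzero ring). *)
Definition integral_domain (K : fieldType) (A : comAlgType K) : Prop :=
  forall u v : A, u * v = 0 -> u = 0 \/ v = 0.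

(* K-algebra automorphisms of A = K[X]; these are exactly the pullbacks
   of the regular automorphisms of the affine variety X. *)
Definition kalg_aut (K : fieldType) (A : comAlgType K) (phi : A -> A) : Prop :=
  (forall (k : K) u v, phi (k *: u + v) = k *: phi u + phi v) /\
  phi 1 = 1 /\
  (forall u v, phi (u * v) = phi u * phi v) /\
  bijective phi.

Definition derivation (K : fieldType) (A : comAlgType K) (d : A -> A) : Prop :=
  (forall (k : K) u v, d (k *: u + v) = k *: d u + d v) /\
  (forall u v, d (u * v) = u * d v + v * d u).

Definition locally_nilpotent (K : fieldType) (A : comAlgType K) (d : A -> A) : Prop :=
  forall a : A, exists n : nat, iter n d a = 0.

Definition Z_grading (K : fieldType) (A : comAlgType K) (G : int -> A -> Prop) : Prop :=
  (forall i, subspace (G i)) /\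
  (forall i j u v, G i u -> G j v -> G (i + j)%R (u * v)) /\
  (forall a : A, exists (s : seq int) (f : int -> A),
      uniq s /\ (forall i, G i (f i)) /\ a = \sum_(i <- s) f i) /\
  (forall (s : seq int) (f : int -> A), uniq s -> (forall i, G i (f i)) ->
      \sum_(i <- s) f i = 0 -> forall i, i \in s -> f i = 0).

From HB Require Import structures.
From mathcomp Require Import all_boot all_order all_algebra.
From Stdlib Require Import ClassicalEpsilon.
Import GRing.Theory.

Set Implicit Arguments.
Unset Strict Implicit.
Unset Printing Implicit Defensive.

Local Open Scope ring_scope.

(* An automorphism-invariant subspace U is stable under every operator that can
   be recovered from automorphisms by linear algebra.  If d is locally
   nilpotent, exp (t d) = \sum_k t^k / k! d^k is an automorphism for every t,
   and for fixed u it is a polynomial in t whose coefficients are the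
   d^k u / k!; evaluating it at more points than its degree and inverting the
   Vandermonde matrix puts every coefficient, in particular d u, into U.  A
   Z-grading yields the automorphisms a |-> \sum_i t^i a_i (t <> 0); for
   t = 2^k they send u = \sum_i f_i to the power sums \sum_i (2^i)^k f_i, and
   a Vandermonde matrix again isolates each f_i. *)

Section Subspace.
Variables (K : fieldType) (V : lmodType K) (U : V -> Prop).
Hypothesis U_sub : subspace U.

Lemma subspace0 : U 0. Proof. by case: U_sub. Qed.

Lemma subspaceD u v : U u -> U v -> U (u + v).
Proof. by move=> Uu Uv; have := U_sub.2 1 u v Uu Uv; rewrite scale1r. Qed.

Lemma subspaceZ k u : U u -> U (k *: u).
Proof. by move=> Uu; have := U_sub.2 k u 0 Uu subspace0; rewrite addr0. Qed.

Lemma subspaceB u v : U u -> U v -> U (u - v).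
Proof. by move=> Uu Uv; have := U_sub.2 (-1) v u Uv Uu; rewrite scaleN1r addrC. Qed.

Lemma subspace_sum (I : Type) (r : seq I) (P : pred I) (F : I -> V) :
  (forall i, P i -> U (F i)) -> U (\sum_(i <- r | P i) F i).
Proof.
by move=> UF; apply: (big_ind U) => //; [exact: subspace0 | exact: subspaceD].
Qed.

Lemma subspace_unitmx_comb n (M : 'M[K]_n) (g : 'I_n -> V) : M \in unitmx ->
  (forall i, U (\sum_j M i j *: g j)) -> forall j, U (g j).
Proof.
move=> Munit UMg j.
have -> : g j = \sum_i invmx M j i *: \sum_l M i l *: g l.
  under eq_bigr do rewrite scaler_sumr.
  rewrite exchange_big /=.
  under eq_bigr do (under eq_bigr do rewrite scalerA; rewrite -scaler_suml).
  have invM_M l : \sum_i invmx M j i * M i l = (j == l)%:R.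
    by have := congr1 (fun N : 'M_n => N j l) (mulVmx Munit); rewrite !mxE.
  under eq_bigr => l _ do rewrite invM_M.
  rewrite (bigD1 j) //= eqxx scale1r big1 ?addr0 // => l.
  by rewrite eq_sym => /negbTE ->; rewrite scale0r.
by apply: subspace_sum => i _; apply: subspaceZ.
Qed.

Lemma Vandermonde_unitmx n (x : 'I_n -> K) : injective x ->
  Vandermonde n (\row_j x j) \in unitmx.
Proof.
move=> x_inj; rewrite unitmxE det_Vandermonde unitfE.
apply/prodf_neq0 => i _; apply/prodf_neq0 => j ij.
rewrite !mxE subr_eq0; apply: contraTneq ij => /x_inj ->.
by rewrite ltnn.
Qed.

Lemma subspace_coefs_of_values n (x : 'I_n -> K) (g : 'I_n -> V) :
  injective x ->
  (forall i, U (\sum_(k < n) x i ^+ k *: g k)) -> forall k, U (g k).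
Proof.
move=> x_inj Ug; apply: (@subspace_unitmx_comb n (Vandermonde n (\row_j x j))^T).
  by rewrite unitmx_tr Vandermonde_unitmx.
by move=> i; under eq_bigr do rewrite !mxE; apply: Ug.
Qed.

Lemma subspace_terms_of_power_sums n (x : 'I_n -> K) (g : 'I_n -> V) :
  injective x ->
  (forall k : 'I_n, U (\sum_(i < n) x i ^+ k *: g i)) -> forall i, U (g i).
Proof.
move=> x_inj Ug; apply: (@subspace_unitmx_comb n (Vandermonde n (\row_j x j))).
  exact: Vandermonde_unitmx.
by move=> k; under eq_bigr do rewrite !mxE; apply: Ug.
Qed.

End Subspace.

Section LinearIter.
Variables (K : fieldType) (V : lmodType K) (f : V -> V).
Hypothesis f_lin : linear f.

Lemma lin0 : f 0 = 0.
Proof. by have := f_lin (-1) 0 0; rewrite scaler0 addr0 scaleN1r addNr. Qed.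

Lemma linD u v : f (u + v) = f u + f v.
Proof. by have := f_lin 1 u v; rewrite !scale1r. Qed.

Lemma linZ k u : f (k *: u) = k *: f u.
Proof. by have := f_lin k u 0; rewrite !addr0 lin0 addr0. Qed.

Lemma linB u v : f (u - v) = f u - f v.
Proof. by rewrite addrC -scaleN1r f_lin scaleN1r addrC. Qed.

Lemma lin_sum (I : Type) (r : seq I) (F : I -> V) :
  f (\sum_(i <- r) F i) = \sum_(i <- r) f (F i).
Proof. exact: (big_morph f linD lin0). Qed.

Lemma iter_linear n : linear (iter n f).
Proof. by elim: n => [|n IHn] k u v //=; rewrite IHn f_lin. Qed.

End LinearIter.

Lemma iter_eq0_leq (K : fieldType) (V : lmodType K) (f : V -> V) m n u :
  linear f -> iter m f u = 0 -> (m <= n)%N -> iter n f u = 0.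
Proof.
by move=> f_lin fmu /subnK <-; rewrite iterD fmu (lin0 (iter_linear f_lin _)).
Qed.

Lemma inj_surj_bij (T : choiceType) (f : T -> T) :
  injective f -> (forall b, exists a, f a = b) -> bijective f.
Proof.
move=> f_inj f_surj.
have f_surjb b : exists a, f a == b.
  by have [a fab] := f_surj b; exists a; apply/eqP.
pose g b := xchoose (f_surjb b).
have fK : cancel g f by move=> b; apply/eqP/(xchooseP (f_surjb b)).
by exists g => // a; apply: f_inj; rewrite fK.
Qed.

Lemma kalg_aut_bij (K : fieldType) (A : comAlgType K) (f : A -> A) :
  linear f -> {morph f : u v / u * v} -> bijective f -> kalg_aut f.
Proof.
move=> f_lin fM [g fK gK]; split=> //; split; last by split=> //; exists g.
by have := fM 1 (g 1); rewrite mul1r gK mulr1.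
Qed.

Section CharacteristicZero.
Variable K : fieldType.
Hypothesis K0 : [pchar K] =i pred0.

Lemma pchar0_natr_inj : injective (fun n : nat => n%:R : K).
Proof.
suff lt_neq m n : (m < n)%N -> m%:R != n%:R :> K.
  move=> m n /= emn.
  by case: (ltngtP m n) => [/lt_neq|/lt_neq|]; rewrite ?emn ?eqxx.
move=> lt_mn; rewrite eq_sym -subr_eq0 -natrB; last exact: ltnW.
by rewrite ((pcharf0P _).1 K0) subn_eq0 -ltnNge.
Qed.

Lemma pchar0_mulrSn_eq0 (V : lmodType K) (v : V) n : v *+ n.+1 = 0 -> v = 0.
Proof.
have n1_neq0 : n.+1%:R != 0 :> K by rewrite ((pcharf0P _).1 K0).
by move=> vn0; rewrite -[v]scale1r -(mulVf n1_neq0) -scalerA scaler_nat vn0 scaler0.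
Qed.

Lemma pchar0_expr2z_inj : injective (fun i : int => 2 ^ i : K).
Proof.
have two_neq0 : 2 != 0 :> K by rewrite ((pcharf0P _).1 K0).
have expr2_eq1 (n : nat) : 2 ^+ n = 1 :> K -> n = 0%N.
  rewrite -natrX -[1]/(1%:R) => /pchar0_natr_inj /eqP.
  by rewrite -[1%N](expn0 2) eqn_exp2l // => /eqP.
move=> i j /= eij; apply/eqP; rewrite -subr_eq0; apply/eqP.
have : 2 ^ (i - j) = 1 :> K by rewrite expfzDr // -invr_expz eij mulfV ?expfz_neq0.
case: (i - j) => n /=; first by move/expr2_eq1 ->.
by move/(congr1 GRing.inv); rewrite invrK invr1 => /expr2_eq1.
Qed.

End CharacteristicZero.

Section Exponential.
Variables (K : fieldType) (A : comAlgType K) (d : A -> A).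
Hypotheses (K0 : [pchar K] =i pred0) (d_der : derivation d).
Hypothesis d_lnil : locally_nilpotent d.

Let d_lin : linear d := d_der.1.

Lemma iter_nilP a : exists n, iter n d a == 0.
Proof. by have [n dna] := d_lnil a; exists n; apply/eqP. Qed.

Definition nil_index a := ex_minn (iter_nilP a).

Lemma iter_nil_index a : iter (nil_index a) d a = 0.
Proof. by rewrite /nil_index; case: ex_minnP => n /eqP. Qed.

Definition expd_poly a : {poly A} :=
  \poly_(n < nil_index a) ((n`!%:R)^-1 *: iter n d a).

Lemma coef_expd_poly a n : (expd_poly a)`_n = (n`!%:R)^-1 *: iter n d a.
Proof.
rewrite coef_poly; case: ltnP => // le_idx_n.
by rewrite (iter_eq0_leq d_lin (iter_nil_index a) le_idx_n) scaler0.
Qed.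

Lemma coef0_expd_poly a : (expd_poly a)`_0 = a.
Proof. by rewrite coef_expd_poly invr1 scale1r. Qed.

Lemma expd_polyL k u v :
  expd_poly (k *: u + v) = k%:A%:P * expd_poly u + expd_poly v.
Proof.
apply/polyP => n; rewrite coefD coefCM !coef_expd_poly (iter_linear d_lin).
by rewrite mulr_algl scalerDr !scalerA mulrC.
Qed.

Lemma expd_polyD u v : expd_poly (u + v) = expd_poly u + expd_poly v.
Proof. by have := expd_polyL 1 u v; rewrite !scale1r polyC1 mul1r. Qed.

Lemma deriv_expd_poly a : (expd_poly a)^`() = expd_poly (d a).
Proof.
apply/polyP => n; rewrite coef_deriv !coef_expd_poly iterSr -scaler_nat scalerA.
have n1_neq0 : n.+1%:R != 0 :> K by rewrite ((pcharf0P _).1 K0).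
by rewrite factS natrM invfM mulrA mulfV ?mul1r.
Qed.

Lemma expd_polyM a b : expd_poly (a * b) = expd_poly a * expd_poly b.
Proof.
pose Q a b := expd_poly (a * b) - expd_poly a * expd_poly b.
have derivQ a' b' : (Q a' b')^`() = Q a' (d b') + Q (d a') b'.
  rewrite /Q derivB derivM !deriv_expd_poly d_der.2 expd_polyD [d a' * b']mulrC.
  by rewrite [expd_poly (d a') * _]mulrC opprD [- _ + - _]addrC addrACA.
(* Coefficient n.+1 of Q a b is, up to the unit n.+1, coefficient n of
   Q a (d b) + Q (d a) b; hence all coefficients vanish by induction on n. *)
suff Q0 n a' b' : (Q a' b')`_n = 0.
  by apply/polyP => n; apply/eqP; rewrite -subr_eq0 -coefB; apply/eqP/Q0.
elim: n a' b' => [|n IHn] a' b'.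
  by rewrite coefB coef0M !coef0_expd_poly subrr.
apply: (@pchar0_mulrSn_eq0 _ K0 _ _ n).
by rewrite -coef_deriv derivQ coefD !IHn addr0.
Qed.

Definition expd (t : K) a := (expd_poly a).[t%:A].

Lemma expd_sum (t : K) M a : iter M d a = 0 ->
  expd t a = \sum_(k < M) (t ^+ k / k`!%:R) *: iter k d a.
Proof.
move=> dMa; rewrite /expd (@horner_coef_wide _ M).
  by apply: eq_bigr => k _; rewrite coef_expd_poly exprZn expr1n mulr_algr scalerA.
apply/leq_sizeP => k le_Mk.
by rewrite coef_expd_poly (iter_eq0_leq d_lin dMa le_Mk) scaler0.
Qed.

Lemma expd_linear (t : K) : linear (expd t).
Proof. by move=> k u v; rewrite /expd expd_polyL hornerD hornerCM mulr_algl. Qed.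

Lemma expdM (t : K) : {morph expd t : u v / u * v}.
Proof. by move=> u v; rewrite /expd expd_polyM hornerM. Qed.

Lemma expd_id (t : K) b : d b = 0 -> expd t b = b.
Proof.
by move=> db0; rewrite (@expd_sum t 1) // big_ord1 expr0 mul1r invr1 scale1r.
Qed.

Lemma d_expd (t : K) a : d (expd t a) = expd t (d a).
Proof.
have dna_da : iter (nil_index a) d (d a) = 0.
  by rewrite -iterSr iterS iter_nil_index lin0.
rewrite (expd_sum t (iter_nil_index a)) (expd_sum t dna_da) (lin_sum d_lin).
by apply: eq_bigr => k _; rewrite (linZ d_lin) -iterS iterSr.
Qed.

Lemma iter_expd (t : K) n a : iter n d (expd t a) = expd t (iter n d a).
Proof. by elim: n => //= n ->; rewrite d_expd. Qed.

(* Both proofs go by induction on the nilpotency order, using that [expd t]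
   fixes the kernel of [d] and commutes with [d]. *)
Lemma expd_inj (t : K) : injective (expd t).
Proof.
move=> a b eab; apply/eqP; rewrite -subr_eq0; apply/eqP.
have : expd t (a - b) = 0 by rewrite (linB (expd_linear t)) eab subrr.
move: (a - b) => x; have := iter_nil_index x; move: (nil_index x) => n.
elim: n x => [|n IHn] x /= dnx ex0; first exact: dnx.
apply: IHn => //.
by rewrite -(expd_id t dnx) -iter_expd ex0 (lin0 (iter_linear d_lin n)).
Qed.

Lemma expd_surj (t : K) b : exists a, expd t a = b.
Proof.
have := iter_nil_index b; move: (nil_index b) => n.
elim: n b => [|n IHn] b /= dnb.
  by exists 0; rewrite dnb (lin0 (expd_linear t)).
have [a ea] : exists a, expd t a = expd t b - b.
  apply: IHn.
  by rewrite (linB (iter_linear d_lin n)) iter_expd (expd_id t dnb) subrr.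
by exists (b - a); rewrite (linB (expd_linear t)) ea opprB addrC subrK.
Qed.

Lemma expd_aut (t : K) : kalg_aut (expd t).
Proof.
apply: kalg_aut_bij (expd_linear t) (expdM t) _.
exact: inj_surj_bij (@expd_inj t) (expd_surj t).
Qed.

End Exponential.

Lemma uniq_cover (T : eqType) (s s' : seq T) :
  exists2 r : seq T, uniq r & {subset s <= r} /\ {subset s' <= r}.
Proof.
exists (undup (s ++ s')); first exact: undup_uniq.
by split=> x xs; rewrite mem_undup mem_cat xs ?orbT.
Qed.

Lemma big_uniq_support (I : eqType) (V : nmodType) (r r' : seq I) (F : I -> V) :
  uniq r -> uniq r' -> {subset r <= r'} -> (forall i, i \notin r -> F i = 0) ->
  \sum_(i <- r') F i = \sum_(i <- r) F i.
Proof.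
move=> ur ur' rr' F0.
rewrite (bigID (mem r)) /= [X in _ + X]big1 ?addr0 => [|i /F0 //].
rewrite -big_filter; apply/perm_big/uniq_perm; rewrite ?filter_uniq // => i.
by rewrite mem_filter; case: (boolP (i \in r)) => // /rr' ->.
Qed.

Section TorusAction.
Variables (K : fieldType) (A : comAlgType K) (G : int -> A -> Prop).
Hypothesis G_grading : Z_grading G.

Let G_sub i : subspace (G i) := G_grading.1 i.

Definition homog_decomp (a : A) (r : seq int) (f : int -> A) :=
  [/\ uniq r, forall i, G i (f i), forall i, i \notin r -> f i = 0
    & a = \sum_(i <- r) f i].

Lemma homog_decompP a : exists rf, homog_decomp a rf.1 rf.2.
Proof.
have [s [f [us [Gf ->]]]] := G_grading.2.2.1 a.
exists (s, fun i => if i \in s then f i else 0); split=> //= [i | i /negPf -> //|].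
  by case: ifP => _; [exact: Gf | exact: subspace0].
by apply: eq_big_seq => i ->.
Qed.

Lemma homog_decomp_widen a r r' f : homog_decomp a r f ->
  uniq r' -> {subset r <= r'} -> homog_decomp a r' f.
Proof.
case=> ur Gf f0 ea ur' rr'; split=> // [i ir'|].
  by apply: f0; exact: contra (rr' i) ir'.
by rewrite ea (big_uniq_support ur ur' rr' f0).
Qed.

Lemma homog_decompL k a b r f g : homog_decomp a r f -> homog_decomp b r g ->
  homog_decomp (k *: a + b) r (fun i => k *: f i + g i).
Proof.
case=> ur Gf f0 ea [_ Gg g0 eb]; split=> // [i | i ir|].
- exact: (G_sub i).2.
- by rewrite f0 ?g0 ?scaler0 ?addr0.
- by rewrite big_split -scaler_sumr -ea -eb.
Qed.

Lemma homog_decomp_unique a r f r' f' :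
  homog_decomp a r f -> homog_decomp a r' f' -> f =1 f'.
Proof.
move=> dec dec' i; have [R uR [rR r'R]] := uniq_cover r r'.
have [_ Gf f0 ea] := homog_decomp_widen dec uR rR.
have [_ Gf' f'0 ea'] := homog_decomp_widen dec' uR r'R.
have [iR | iNR] := boolP (i \in R); last by rewrite f0 ?f'0.
apply/eqP; rewrite -subr_eq0; apply/eqP.
apply: (G_grading.2.2.2 R (fun j => f j - f' j) uR _ _ i iR) => [j|].
  exact: subspaceB.
by rewrite sumrB -ea -ea' subrr.
Qed.

Definition homog_decomp_of a :=
  proj1_sig (constructive_indefinite_description _ (homog_decompP a)).

Definition hsupp a := (homog_decomp_of a).1.
Definition hcomp a := (homog_decomp_of a).2.

Lemma hcompP a : homog_decomp a (hsupp a) (hcomp a).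
Proof.
rewrite /hsupp /hcomp /homog_decomp_of.
by case: constructive_indefinite_description.
Qed.

Definition torus_act (t : K) a := \sum_(i <- hsupp a) t ^ i *: hcomp a i.

Lemma torus_actE (t : K) a r f :
  homog_decomp a r f -> torus_act t a = \sum_(i <- r) t ^ i *: f i.
Proof.
move=> dec; have [R uR [sR rR]] := uniq_cover (hsupp a) r.
have [us _ s0 _] := hcompP a; have [ur _ f0 _] := dec.
rewrite /torus_act -(big_uniq_support us uR sR) -?(big_uniq_support ur uR rR).
- by apply: eq_bigr => i _; rewrite (homog_decomp_unique (hcompP a) dec).
- by move=> i /f0 ->; rewrite scaler0.
- by move=> i /s0 ->; rewrite scaler0.
Qed.

Lemma torus_act_linear (t : K) : linear (torus_act t).
Proof.
move=> k a b; have [R uR [aR bR]] := uniq_cover (hsupp a) (hsupp b).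
have deca := homog_decomp_widen (hcompP a) uR aR.
have decb := homog_decomp_widen (hcompP b) uR bR.
rewrite (torus_actE t (homog_decompL k deca decb)).
rewrite (torus_actE t deca) (torus_actE t decb) scaler_sumr -big_split.
by apply: eq_bigr => i _; rewrite scalerDr !scalerA mulrC.
Qed.

Lemma torus_act_homog (t : K) j x : G j x -> torus_act t x = t ^ j *: x.
Proof.
move=> Gx; pose f i := if i == j then x else 0.
have decx : homog_decomp x [:: j] f.
  split=> // [i | i | ]; rewrite /f ?big_seq1 ?eqxx //.
    by case: eqP => [->|_]; [exact: Gx | exact: subspace0].
  by rewrite mem_seq1 => /negPf ->.
by rewrite (torus_actE t decx) big_seq1 /f eqxx.
Qed.

Lemma torus_act_sum (t : K) (s : seq int) (f : int -> A) : (forall i, G i (f i)) ->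
  torus_act t (\sum_(i <- s) f i) = \sum_(i <- s) t ^ i *: f i.
Proof.
move=> Gf; rewrite (lin_sum (torus_act_linear t) s).
by apply: eq_bigr => i _; apply: torus_act_homog.
Qed.

Lemma torus_actM (t : K) : t != 0 -> {morph torus_act t : a b / a * b}.
Proof.
move=> t_neq0 a b; have [_ Ga _ ea] := hcompP a; have [_ Gb _ eb] := hcompP b.
rewrite [in LHS]ea [in LHS]eb mulr_suml (lin_sum (torus_act_linear t) (hsupp a)).
rewrite [in RHS]/torus_act mulr_suml; apply: eq_bigr => i _.
rewrite mulr_sumr (lin_sum (torus_act_linear t) (hsupp b)) mulr_sumr.
apply: eq_bigr => j _.
rewrite (torus_act_homog t (G_grading.2.1 i j _ _ (Ga i) (Gb j))).
by rewrite expfzDr // -scalerAl -scalerAr scalerA.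
Qed.

Lemma torus_actK (t : K) : t != 0 -> cancel (torus_act t) (torus_act t^-1).
Proof.
move=> t_neq0 a; have [_ Ga _ ea] := hcompP a.
rewrite [torus_act t a]/torus_act (lin_sum (torus_act_linear _) (hsupp a)) [RHS]ea.
apply: eq_bigr => i _; rewrite (torus_act_homog _ (subspaceZ (G_sub i) _ (Ga i))).
by rewrite scalerA -expfzMl mulVf // exp1rz scale1r.
Qed.

Lemma torus_act_aut (t : K) : t != 0 -> kalg_aut (torus_act t).
Proof.
move=> t_neq0; apply: kalg_aut_bij (torus_act_linear t) (torus_actM t_neq0) _.
exists (torus_act t^-1); first exact: torus_actK.
by move=> a; rewrite -{1}[t]invrK torus_actK ?invr_eq0.
Qed.

End TorusAction.

Definition aut_invariant (K : fieldType) (A : comAlgType K) (U : A -> Prop) :=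
  forall phi : A -> A, kalg_aut phi -> forall u, U u -> U (phi u).

Section AutInvariantSubspace.
Variables (K : fieldType) (A : comAlgType K) (U : A -> Prop).
Hypotheses (K0 : [pchar K] =i pred0) (U_sub : subspace U) (U_aut : aut_invariant U).

Lemma aut_invariant_lnd_stable d : derivation d -> locally_nilpotent d ->
  forall u, U u -> U (d u).
Proof.
move=> d_der d_lnil u Uu; have [n dnu] := d_lnil u.
have dn2u : iter n.+2 d u = 0 by apply: iter_eq0_leq d_der.1 dnu _; rewrite leqW.
pose x (i : 'I_n.+2) := i%:R : K.
have x_inj : injective x by move=> i j /(pchar0_natr_inj K0) /ord_inj.
have Uvalues i : U (\sum_(k < n.+2) x i ^+ k *: ((k`!%:R)^-1 *: iter k d u)).
  under eq_bigr do rewrite scalerA; rewrite -(expd_sum d_der d_lnil _ dn2u).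
  exact: U_aut (expd_aut K0 d_der d_lnil _) _ Uu.
have := subspace_coefs_of_values U_sub x_inj Uvalues (Ordinal (isT : 1 < n.+2)%N).
by rewrite /= invr1 scale1r.
Qed.

Lemma aut_invariant_homog_comp G : Z_grading G ->
  forall u, U u -> forall (s : seq int) (f : int -> A),
    uniq s -> (forall i, G i (f i)) -> u = \sum_(i <- s) f i ->
    forall i, i \in s -> U (f i).
Proof.
move=> G_grading u Uu s f us Gf eu i i_s.
have two_neq0 : 2 != 0 :> K by rewrite ((pcharf0P _).1 K0).
pose x (l : 'I_(size s)) := 2 ^ s`_l : K.
have x_inj : injective x.
  by move=> l l' /(pchar0_expr2z_inj K0) /eqP; rewrite nth_uniq // => /eqP /ord_inj.
have Upower_sums k : U (\sum_(l < size s) x l ^+ k *: f s`_l).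
  have := U_aut (torus_act_aut G_grading (expf_neq0 k two_neq0)) Uu.
  rewrite eu torus_act_sum // (big_nth 0) big_mkord; congr U.
  by apply: eq_bigr => l _; rewrite /x exprnP exprzAC.
have i_idx : (index i s < size s)%N by rewrite index_mem.
have := subspace_terms_of_power_sums U_sub x_inj Upower_sums (Ordinal i_idx).
by rewrite /= nth_index.
Qed.

End AutInvariantSubspace.

Theorem lemma3 (K : closedFieldType) (A : comAlgType K) (U : A -> Prop) :
  [pchar K] =i pred0 ->
  fin_gen_algebra A -> integral_domain A ->
  subspace U ->
  (forall phi : A -> A, kalg_aut phi -> forall u, U u -> U (phi u)) ->
  (forall d : A -> A, derivation d -> locally_nilpotent d ->
     forall u, U u -> U (d u)) /\
  (forall G : int -> A -> Prop, Z_grading G ->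
     forall u, U u -> forall (s : seq int) (f : int -> A),
       uniq s -> (forall i, G i (f i)) -> u = \sum_(i <- s) f i ->
       forall i, i \in s -> U (f i)).
Proof.
move=> K0 _ _ U_sub U_aut.
split; [exact: aut_invariant_lnd_stable | exact: aut_invariant_homog_comp].
Qed.
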